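(* Let $a_0,\dots,a_4,b_0,\dots,b_4>0$. Assume $Q<0$, $z_0>0$ (so that $\xi^{ext}_1,\dots,\xi^{ext}_4$ are real) and $\xi_{min}>0$. If either (a) $P_5(\xi_{min})=0$ or (b) $P_5(\xi_{max})=0$, then the quartic operator $\mathcal{Q}$ has at least two fixed points in $\mathbb{R}_>^2$, i.e. $N_>^{fix}(\mathcal{Q})\ge 2$.
   Context: Quartic operator on $\mathbb{R}_+^2=\{(x,y):x\ge0,y\ge0\}$: $\mathcal{Q}(x,y)=\big(\sum_{i=0}^4\binom{4}{i}a_i x^{4-i}y^i,\ \sum_{i=0}^4\binom{4}{i}b_i x^{4-i}y^i\big)$; $\mathbb{R}_>^2=\{(x,y):x>0,y>0\}$; $N_>^{fix}(\mathcal{Q})$ is the number of fixed points of $\mathcal{Q}$ in $\mathbb{R}_>^2$. Set $\mu_0=a_4$, $\mu_1=4a_3-b_4$, $\mu_2=6a_2-4b_3$, $\mu_3=4a_1-6b_2$, $\mu_4=a_0-4b_1$, $\mu_5=b_0$, and $P_5(\xi)=\mu_0\xi^5+\mu_1\xi^4+\mu_2\xi^3+\mu_3\xi^2+\mu_4\xi-\mu_5$. Define $p=\frac{15\mu_0\mu_2-6\mu_1^2}{25\mu_0^2}$, $q=\frac{50\mu_0^2\mu_3+8\mu_1^3-30\mu_0\mu_1\mu_2}{125\mu_0^3}$, $r=\frac{15\mu_0\mu_1^2\mu_2-50\mu_0^2\mu_1\mu_3-3\mu_1^4+125\mu_0^3\mu_4}{625\mu_0^4}$ (so that $\omega^4+p\omega^2+q\omega+r=P_5'(\omega-\frac{\mu_1}{5\mu_0})/(5\mu_0)$),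 $a=-\frac{p^2}{12}-r$, $b=-\frac{p^3}{108}+\frac{pr}{3}-\frac{q^2}{8}$, $Q=(a/3)^3+(b/2)^2$. When $Q<0$ (hence $a<0$), let $\alpha\in[0,\pi]$ with $\cos\alpha=-\frac{b}{2}\left(-\frac{3}{a}\right)^{3/2}$ and $z_0=2\sqrt{-a/3}\,\cos\!\left(\frac{2\pi}{3}+\frac{\alpha}{3}\right)-\frac{p}{3}$. For $z_0>0$ put $\xi^{ext}_{1,2}=\frac12\Big(\sqrt{2z_0}\pm\sqrt{2z_0-4\big(\frac p2+z_0+\frac{q}{2\sqrt{2z_0}}\big)}\Big)-\frac{\mu_1}{5\mu_0}$, $\xi^{ext}_{3,4}=\frac12\Big(-\sqrt{2z_0}\pm\sqrt{2z_0-4\big(\frac p2+z_0-\frac{q}{2\sqrt{2z_0}}\big)}\Big)-\frac{\mu_1}{5\mu_0}$, and $\xi_{min}=\min_j\xi^{ext}_j$, $\xi_{max}=\max_j\xi^{ext}_j$. *)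

From Stdlib Require Import Reals.
Open Scope R_scope.

Record coeffs := Coeffs {
  a0 : R; a1 : R; a2 : R; a3 : R; a4 : R;
  b0 : R; b1 : R; b2 : R; b3 : R; b4 : R }.

Definition Qop1 (c : coeffs) (x y : R) : R :=
  a0 c * x^4 + 4 * a1 c * x^3 * y + 6 * a2 c * x^2 * y^2
  + 4 * a3 c * x * y^3 + a4 c * y^4.
Definition Qop2 (c : coeffs) (x y : R) : R :=
  b0 c * x^4 + 4 * b1 c * x^3 * y + 6 * b2 c * x^2 * y^2
  + 4 * b3 c * x * y^3 + b4 c * y^4.

Definition is_pos_fixed_point (c : coeffs) (x y : R) : Prop :=
  0 < x /\ 0 < y /\ Qop1 c x y = x /\ Qop2 c x y = y.

Definition at_least_two_pos_fixed_points (c : coeffs) : Prop :=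
  exists x1 y1 x2 y2,
    is_pos_fixed_point c x1 y1 /\ is_pos_fixed_point c x2 y2 /\
    (x1, y1) <> (x2, y2).

Definition mu0 (c : coeffs) : R := a4 c.
Definition mu1 (c : coeffs) : R := 4 * a3 c - b4 c.
Definition mu2 (c : coeffs) : R := 6 * a2 c - 4 * b3 c.
Definition mu3 (c : coeffs) : R := 4 * a1 c - 6 * b2 c.
Definition mu4 (c : coeffs) : R := a0 c - 4 * b1 c.
Definition mu5 (c : coeffs) : R := b0 c.

Definition P5 (c : coeffs) (xi : R) : R :=
  mu0 c * xi^5 + mu1 c * xi^4 + mu2 c * xi^3 + mu3 c * xi^2 + mu4 c * xi - mu5 c.

Definition pp (c : coeffs) : R :=
  (15 * mu0 c * mu2 c - 6 * (mu1 c)^2) / (25 * (mu0 c)^2).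
Definition qq (c : coeffs) : R :=
  (50 * (mu0 c)^2 * mu3 c + 8 * (mu1 c)^3 - 30 * mu0 c * mu1 c * mu2 c)
  / (125 * (mu0 c)^3).
Definition rr (c : coeffs) : R :=
  (15 * mu0 c * (mu1 c)^2 * mu2 c - 50 * (mu0 c)^2 * mu1 c * mu3 c
   - 3 * (mu1 c)^4 + 125 * (mu0 c)^3 * mu4 c) / (625 * (mu0 c)^4).

Definition aa (c : coeffs) : R := - (pp c)^2 / 12 - rr c.
Definition bb (c : coeffs) : R :=
  - (pp c)^3 / 108 + pp c * rr c / 3 - (qq c)^2 / 8.
Definition QQ (c : coeffs) : R := (aa c / 3)^3 + (bb c / 2)^2.

(* (-3/a)^(3/2), for a < 0, written as (-3/a) * sqrt(-3/a) *)
Definition cos_alpha (c : coeffs) : R :=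
  - (bb c / 2) * ((- 3 / aa c) * sqrt (- 3 / aa c)).

Definition z0 (c : coeffs) (alpha : R) : R :=
  2 * sqrt (- aa c / 3) * cos (2 * PI / 3 + alpha / 3) - pp c / 3.

Definition shift (c : coeffs) : R := mu1 c / (5 * mu0 c).

Definition xi_ext1 (c : coeffs) (alpha : R) : R :=
  let z := z0 c alpha in
  (sqrt (2 * z) + sqrt (2 * z - 4 * (pp c / 2 + z + qq c / (2 * sqrt (2 * z))))) / 2
  - shift c.
Definition xi_ext2 (c : coeffs) (alpha : R) : R :=
  let z := z0 c alpha in
  (sqrt (2 * z) - sqrt (2 * z - 4 * (pp c / 2 + z + qq c / (2 * sqrt (2 * z))))) / 2
  - shift c.
Definition xi_ext3 (c : coeffs) (alpha : R) : R :=
  let z := z0 c alpha in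
  (- sqrt (2 * z) + sqrt (2 * z - 4 * (pp c / 2 + z - qq c / (2 * sqrt (2 * z))))) / 2
  - shift c.
Definition xi_ext4 (c : coeffs) (alpha : R) : R :=
  let z := z0 c alpha in
  (- sqrt (2 * z) - sqrt (2 * z - 4 * (pp c / 2 + z - qq c / (2 * sqrt (2 * z))))) / 2
  - shift c.

Definition xi_min (c : coeffs) (alpha : R) : R :=
  Rmin (Rmin (xi_ext1 c alpha) (xi_ext2 c alpha)) (Rmin (xi_ext3 c alpha) (xi_ext4 c alpha)).
Definition xi_max (c : coeffs) (alpha : R) : R :=
  Rmax (Rmax (xi_ext1 c alpha) (xi_ext2 c alpha)) (Rmax (xi_ext3 c alpha) (xi_ext4 c alpha)).

(* A point (x, t x) with x, t > 0 is a fixed point of Q exactly when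
   x^3 Qop1(1,t) = 1 and Qop2(1,t) = t Qop1(1,t); the second condition says
   P5(t) = 0.  Hence every positive root of P5 yields a positive fixed
   point, and distinct roots yield distinct fixed points.

   The numbers xi_ext_1..4 are the critical points of P5: shifting by
   mu1/(5 mu0) turns P5'/(5 mu0) into the depressed quartic
   w^4 + p w^2 + q w + r, whose resolvent cubic has the trigonometric
   (Viete) root y = 2 sqrt(-a/3) cos(2pi/3 + alpha/3); Ferrari's method with
   z0 = y - p/3 then factors the quartic into four distinct linear factors.
   So P5' = 5 mu0 (x - xi_1)..(x - xi_4) with simple roots.

   If P5(xi_min) = 0, P5 decreases just to the right of xi_min and tends to
   +oo, which gives a second root beyond xi_min.  If P5(xi_max) = 0, P5
   decreases just to the left of xi_max while P5(0) = -b0 < 0, which gives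
   a second root in (0, xi_max).  In both cases two positive roots, hence
   two positive fixed points. *)

From Stdlib Require Import Reals Lra Psatz.
From Coquelicot Require Import Coquelicot.
Open Scope R_scope.

Lemma Qop1_homogeneous c x t : Qop1 c x (t * x) = x^4 * Qop1 c 1 t.
Proof. unfold Qop1; ring. Qed.

Lemma Qop2_homogeneous c x t : Qop2 c x (t * x) = x^4 * Qop2 c 1 t.
Proof. unfold Qop2; ring. Qed.

(* P5 measures the failure of the ray y = t x to be invariant under Q. *)
Lemma P5_as_ray_defect c t : P5 c t = t * Qop1 c 1 t - Qop2 c 1 t.
Proof. unfold P5, mu0, mu1, mu2, mu3, mu4, mu5, Qop1, Qop2; ring. Qed.

(* On a positive ray the first component is positive, so x^3 Qop1(1,t) = 1 is solvable. *)
Lemma Qop1_ray_pos c t :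
  0 < a0 c -> 0 < a1 c -> 0 < a2 c -> 0 < a3 c -> 0 < a4 c -> 0 < t ->
  0 < Qop1 c 1 t.
Proof.
  intros ha0 ha1 ha2 ha3 ha4 ht. unfold Qop1.
  assert (0 < t^2) by (apply pow_lt; lra).
  assert (0 < t^3) by (apply pow_lt; lra).
  assert (0 < t^4) by (apply pow_lt; lra).
  assert (0 < a1 c * t) by nra. assert (0 < a2 c * t^2) by nra.
  assert (0 < a3 c * t^3) by nra. assert (0 < a4 c * t^4) by nra.
  simpl; nra.
Qed.

Lemma cube_root_exists y : 0 < y -> exists x, 0 < x /\ x^3 = y.
Proof.
  intro hy. exists (Rpower y (1/3)). split; [apply exp_pos|].
  rewrite <- Rpower_pow by apply exp_pos. rewrite Rpower_mult.
  replace (1/3 * INR 3) with 1 by (simpl; field). apply Rpower_1; exact hy.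
Qed.

Lemma fixed_point_of_root c t :
  0 < a0 c -> 0 < a1 c -> 0 < a2 c -> 0 < a3 c -> 0 < a4 c ->
  0 < t -> P5 c t = 0 -> exists x, is_pos_fixed_point c x (t * x).
Proof.
  intros ha0 ha1 ha2 ha3 ha4 ht HP.
  pose proof (Qop1_ray_pos c t ha0 ha1 ha2 ha3 ha4 ht) as HA.
  destruct (cube_root_exists (/ Qop1 c 1 t)) as [x [Hx Hx3]];
    [apply Rinv_0_lt_compat; exact HA|].
  assert (Hunit : x^3 * Qop1 c 1 t = 1) by (rewrite Hx3; field; lra).
  rewrite P5_as_ray_defect in HP.
  exists x. repeat split.
  - exact Hx.
  - nra.
  - rewrite Qop1_homogeneous.
    replace (x^4 * Qop1 c 1 t) with (x * (x^3 * Qop1 c 1 t)) by ring.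
    rewrite Hunit; ring.
  - rewrite Qop2_homogeneous.
    replace (Qop2 c 1 t) with (t * Qop1 c 1 t) by lra.
    replace (x^4 * (t * Qop1 c 1 t)) with (t * x * (x^3 * Qop1 c 1 t)) by ring.
    rewrite Hunit; ring.
Qed.

Lemma two_fixed_points_of_two_roots c t1 t2 :
  0 < a0 c -> 0 < a1 c -> 0 < a2 c -> 0 < a3 c -> 0 < a4 c ->
  0 < t1 -> 0 < t2 -> t1 <> t2 -> P5 c t1 = 0 -> P5 c t2 = 0 ->
  at_least_two_pos_fixed_points c.
Proof.
  intros ha0 ha1 ha2 ha3 ha4 h1 h2 hne e1 e2.
  destruct (fixed_point_of_root c t1 ha0 ha1 ha2 ha3 ha4 h1 e1) as [x1 F1].
  destruct (fixed_point_of_root c t2 ha0 ha1 ha2 ha3 ha4 h2 e2) as [x2 F2].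
  exists x1, (t1 * x1), x2, (t2 * x2). split; [exact F1 | split; [exact F2 |]].
  intro E. injection E as <- E2. destruct F1 as [Hx _].
  apply hne, (Rmult_eq_reg_r x1); lra.
Qed.

Definition P5' (c : coeffs) (x : R) : R :=
  5 * mu0 c * x^4 + 4 * mu1 c * x^3 + 3 * mu2 c * x^2 + 2 * mu3 c * x + mu4 c.

Lemma P5_derivative c x : derivable_pt_lim (P5 c) x (P5' c x).
Proof. apply is_derive_Reals. unfold P5, P5'. auto_derive; auto. ring. Qed.

Lemma P5_continuous c : continuity (P5 c).
Proof.
  intro x. apply derivable_continuous_pt. exists (P5' c x). apply P5_derivative.
Qed.

Lemma P5_lower_bound c X :
  1 <= X ->
  X^4 * (mu0 c * X - (Rabs (mu1 c) + Rabs (mu2 c) + Rabs (mu3 c)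
                      + Rabs (mu4 c) + Rabs (mu5 c))) <= P5 c X.
Proof.
  intro HX.
  assert (dom : forall m k, (k <= 4)%nat -> - (Rabs m * X^4) <= m * X^k).
  { intros m k Hk. pose proof (Rle_pow X k 4 HX Hk).
    assert (0 <= X^k) by (apply pow_le; lra).
    pose proof (Rabs_pos m). pose proof (Rle_abs (- m)). rewrite Rabs_Ropp in *. nra. }
  pose proof (dom (mu1 c) 4%nat ltac:(lia)). pose proof (dom (mu2 c) 3%nat ltac:(lia)).
  pose proof (dom (mu3 c) 2%nat ltac:(lia)). pose proof (dom (mu4 c) 1%nat ltac:(lia)).
  pose proof (dom (- mu5 c) 0%nat ltac:(lia)). rewrite Rabs_Ropp in *.
  unfold P5. simpl in *. nra.
Qed.

Lemma P5_eventually_pos c t : 0 < mu0 c -> exists X, t < X /\ 0 < P5 c X.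
Proof.
  intro H0.
  set (S := Rabs (mu1 c) + Rabs (mu2 c) + Rabs (mu3 c) + Rabs (mu4 c) + Rabs (mu5 c)).
  assert (HS : 0 <= S).
  { unfold S. pose proof (Rabs_pos (mu1 c)). pose proof (Rabs_pos (mu2 c)).
    pose proof (Rabs_pos (mu3 c)). pose proof (Rabs_pos (mu4 c)).
    pose proof (Rabs_pos (mu5 c)). lra. }
  set (X := 1 + Rabs t + S / mu0 c).
  assert (HSm : mu0 c * (S / mu0 c) = S) by (field; lra).
  assert (0 <= S / mu0 c) by (apply Rdiv_le_0_compat; lra).
  pose proof (Rabs_pos t). pose proof (Rle_abs t).
  assert (HX : 1 <= X) by (unfold X; lra).
  assert (0 < X^4) by (apply pow_lt; lra).
  assert (0 < mu0 c * X - S) by (unfold X; nra).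
  pose proof (P5_lower_bound c X HX) as Hbound. fold S in Hbound.
  exists X. split; [unfold X; lra | nra].
Qed.

Lemma root_right_of_negative c t :
  0 < mu0 c -> P5 c t < 0 -> exists t', t < t' /\ P5 c t' = 0.
Proof.
  intros H0 Ht. destruct (P5_eventually_pos c t H0) as [X [HtX HX]].
  destruct (IVT (P5 c) t X (P5_continuous c) HtX Ht HX) as [z [[Hz _] Ez]].
  exists z. split; [|exact Ez]. destruct Hz as [Hz | <-]; [assumption | lra].
Qed.

(* Since P5 0 = -b0 < 0, a positive point where P5 is positive is preceded by
   a positive root. *)
Lemma root_left_of_positive c t :
  0 < mu5 c -> 0 < t -> 0 < P5 c t -> exists t', 0 < t' < t /\ P5 c t' = 0.
Proof.
  intros H5 Ht HPt.
  assert (HP0 : P5 c 0 < 0) by (unfold P5; simpl; lra).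
  destruct (IVT (P5 c) 0 t (P5_continuous c) Ht HP0 HPt) as [z [[Hz1 Hz2] Ez]].
  exists z. destruct Hz1 as [Hz1 | <-]; [|lra]. destruct Hz2 as [Hz2 | ->]; [|lra].
  auto.
Qed.

Definition prod4 (x e1 e2 e3 e4 : R) : R := (x - e1) * (x - e2) * (x - e3) * (x - e4).

Definition distinct4 (e1 e2 e3 e4 : R) : Prop :=
  e1 <> e2 /\ e1 <> e3 /\ e1 <> e4 /\ e2 <> e3 /\ e2 <> e4 /\ e3 <> e4.

Definition min4 (e1 e2 e3 e4 : R) : R := Rmin (Rmin e1 e2) (Rmin e3 e4).
Definition max4 (e1 e2 e3 e4 : R) : R := Rmax (Rmax e1 e2) (Rmax e3 e4).

Lemma min4_le e1 e2 e3 e4 :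
  min4 e1 e2 e3 e4 <= e1 /\ min4 e1 e2 e3 e4 <= e2 /\
  min4 e1 e2 e3 e4 <= e3 /\ min4 e1 e2 e3 e4 <= e4.
Proof. unfold min4, Rmin; repeat destruct Rle_dec; lra. Qed.

Lemma prod4_min_first e1 e2 e3 e4 :
  distinct4 e1 e2 e3 e4 ->
  exists r2 r3 r4, min4 e1 e2 e3 e4 < r2 /\ min4 e1 e2 e3 e4 < r3 /\
    min4 e1 e2 e3 e4 < r4 /\
    forall x, prod4 x e1 e2 e3 e4 = prod4 x (min4 e1 e2 e3 e4) r2 r3 r4.
Proof.
  intros (d12 & d13 & d14 & d23 & d24 & d34). unfold min4, prod4, Rmin.
  destruct (Rle_dec e1 e2); destruct (Rle_dec e3 e4);
    [destruct (Rle_dec e1 e3) | destruct (Rle_dec e1 e4)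
    | destruct (Rle_dec e2 e3) | destruct (Rle_dec e2 e4)];
  [ exists e2, e3, e4 | exists e1, e2, e4 | exists e2, e3, e4 | exists e1, e2, e3
  | exists e1, e3, e4 | exists e1, e2, e4 | exists e1, e3, e4 | exists e1, e2, e3 ];
  repeat split; try lra; intro x; ring.
Qed.

Lemma prod4_max_first e1 e2 e3 e4 :
  distinct4 e1 e2 e3 e4 ->
  exists r2 r3 r4, min4 e1 e2 e3 e4 <= r2 /\ r2 < max4 e1 e2 e3 e4 /\
    r3 < max4 e1 e2 e3 e4 /\ r4 < max4 e1 e2 e3 e4 /\
    forall x, prod4 x e1 e2 e3 e4 = prod4 x (max4 e1 e2 e3 e4) r2 r3 r4.
Proof.
  intros (d12 & d13 & d14 & d23 & d24 & d34).
  destruct (min4_le e1 e2 e3 e4) as (M1 & M2 & M3 & M4).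
  revert M1 M2 M3 M4. generalize (min4 e1 e2 e3 e4). intros mn M1 M2 M3 M4.
  unfold max4, prod4, Rmax.
  destruct (Rle_dec e1 e2); destruct (Rle_dec e3 e4);
    [destruct (Rle_dec e2 e4) | destruct (Rle_dec e2 e3)
    | destruct (Rle_dec e1 e4) | destruct (Rle_dec e1 e3)];
  [ exists e1, e2, e3 | exists e1, e3, e4 | exists e1, e2, e4 | exists e1, e3, e4
  | exists e1, e2, e3 | exists e2, e3, e4 | exists e1, e2, e4 | exists e2, e3, e4 ];
  repeat split; try lra; intro x; ring.
Qed.

(* Between a simple smallest critical point t and the next one the
   derivative K (x-t)(x-r2)(x-r3)(x-r4) is negative, so f decreases. *)
Lemma decreases_right_of_smallest f f' K t r2 r3 r4 :
  (forall x, derivable_pt_lim f x (f' x)) -> 0 < K ->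
  t < r2 -> t < r3 -> t < r4 ->
  (forall x, f' x = K * prod4 x t r2 r3 r4) ->
  exists t1, t < t1 /\ f t1 < f t.
Proof.
  intros Hf HK h2 h3 h4 HD.
  set (m := Rmin r2 (Rmin r3 r4)).
  assert (t < m /\ m <= r2 /\ m <= r3 /\ m <= r4) as (tm & m2 & m3 & m4)
    by (unfold m, Rmin; repeat destruct Rle_dec; lra).
  exists ((t + m) / 2). split; [lra|].
  destruct (MVT_cor2 f f' t ((t + m) / 2) ltac:(lra) (fun x _ => Hf x)) as [z [Ez Hz]].
  assert (Hneg : prod4 z t r2 r3 r4 < 0).
  { unfold prod4. assert ((z - t) * (z - r2) < 0) by nra.
    assert (0 < (z - t) * (z - r2) * (z - r3)) by nra. nra. }
  rewrite HD in Ez. assert (K * prod4 z t r2 r3 r4 < 0) by nra. nra.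
Qed.

Lemma decreases_left_of_largest f f' K t r2 r3 r4 :
  (forall x, derivable_pt_lim f x (f' x)) -> 0 < K ->
  r2 < t -> r3 < t -> r4 < t ->
  (forall x, f' x = K * prod4 x t r2 r3 r4) ->
  exists t1, r2 < t1 < t /\ f t < f t1.
Proof.
  intros Hf HK h2 h3 h4 HD.
  set (m := Rmax r2 (Rmax r3 r4)).
  assert (m < t /\ r2 <= m /\ r3 <= m /\ r4 <= m) as (tm & m2 & m3 & m4)
    by (unfold m, Rmax; repeat destruct Rle_dec; lra).
  exists ((t + m) / 2). split; [lra|].
  destruct (MVT_cor2 f f' ((t + m) / 2) t ltac:(lra) (fun x _ => Hf x)) as [z [Ez Hz]].
  assert (Hneg : prod4 z t r2 r3 r4 < 0).
  { unfold prod4. assert (0 > (z - t) * (z - r2)) by nra.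
    assert (0 > (z - t) * (z - r2) * (z - r3)) by nra. nra. }
  rewrite HD in Ez. assert (K * prod4 z t r2 r3 r4 < 0) by nra. nra.
Qed.

Lemma cos_triple t : cos (3 * t) = 4 * cos t ^ 3 - 3 * cos t.
Proof.
  replace (3 * t) with (2 * t + t) by ring.
  rewrite cos_plus, cos_2a_cos, sin_2a.
  pose proof (sin2_cos2 t) as Hpyth. unfold Rsqr in Hpyth.
  replace (2 * sin t * cos t * sin t) with (2 * cos t * (sin t * sin t)) by ring.
  replace (sin t * sin t) with (1 - cos t * cos t) by lra. ring.
Qed.

(* For 0 < alpha < pi, C = cos(2pi/3 + alpha/3) is the smallest of the three
   solutions of 4C^3 - 3C = cos alpha and lies in (-1, -1/2). *)
Lemma viete_cos_bounds alpha :
  0 < alpha < PI ->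
  let C := cos (2 * PI / 3 + alpha / 3) in
  -1 < C < -1/2 /\ cos alpha = 4 * C^3 - 3 * C.
Proof.
  intros Hal C. pose proof PI_RGT_0.
  assert (Ecos : cos (2 * PI / 3) = -1/2).
  { replace (2 * PI / 3) with (PI - PI / 3) by field.
    rewrite Rtrigo_facts.cos_pi_minus, cos_PI3. field. }
  split; [split|].
  - rewrite <- cos_PI. apply cos_decreasing_1; lra.
  - rewrite <- Ecos. apply cos_decreasing_1; lra.
  - unfold C. rewrite <- cos_triple.
    replace (3 * (2 * PI / 3 + alpha / 3)) with (alpha + 2 * PI) by field.
    rewrite cos_plus, cos_2PI, sin_2PI. ring.
Qed.

Definition viete_root (a alpha : R) : R := 2 * sqrt (- a / 3) * cos (2 * PI / 3 + alpha / 3).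

(* When the cubic y^3 + a y + b has negative discriminant and alpha is the
   angle of the trigonometric method, viete_root a alpha is its smallest
   root, and -2 sqrt(-a/3) < y < -sqrt(-a/3). *)
Lemma viete_root_spec a b alpha :
  (a / 3)^3 + (b / 2)^2 < 0 -> 0 <= alpha <= PI ->
  cos alpha = - (b / 2) * ((- 3 / a) * sqrt (- 3 / a)) ->
  let y := viete_root a alpha in
  y^3 + a * y + b = 0 /\ y < 0 /\ 3 * y^2 < - 4 * a /\ - a < 3 * y^2.
Proof.
  intros HQ Hal Hcos y.
  assert (Ha : a < 0).
  { destruct (Rle_or_lt 0 a) as [Ha|]; [|assumption].
    assert (0 <= (a / 3)^3) by (apply pow_le; lra). nra. }
  set (m := sqrt (- a / 3)).
  assert (Hm : 0 < m) by (apply sqrt_lt_R0; lra).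
  assert (Hmm : m * m = - a / 3) by (apply sqrt_sqrt; lra).
  assert (Hm3 : 0 < m * m * m) by (apply Rmult_lt_0_compat; nra).
  assert (Hinv : - 3 / a = / (m * m)) by (rewrite Hmm; field; lra).
  assert (Hca : cos alpha = - (b / 2) / (m * m * m)).
  { rewrite Hcos, Hinv, sqrt_inv, sqrt_square by lra. field. lra. }
  assert (Hb : (b / 2)^2 < (m * m * m)^2).
  { replace (a / 3) with (- (m * m)) in HQ by lra. nra. }
  assert (Hc1 : cos alpha ^ 2 < 1).
  { rewrite Hca. replace ((- (b / 2) / (m * m * m))^2) with ((b / 2)^2 / (m * m * m)^2)
      by (field; lra).
    apply (Rmult_lt_reg_r ((m * m * m)^2)); [nra|]. field_simplify; lra. }
  assert (Hal' : 0 < alpha < PI).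
  { destruct Hal as [[H0 | <-] [HPI | ->]]; try (split; assumption);
      rewrite ?cos_0, ?cos_PI in Hc1; lra. }
  destruct (viete_cos_bounds alpha Hal') as [[HC1 HC2] Htriple].
  set (C := cos (2 * PI / 3 + alpha / 3)) in *.
  assert (Ey : y = 2 * m * C) by reflexivity.
  assert (Eb : b = - 2 * (m * m * m) * (4 * C^3 - 3 * C))
    by (rewrite <- Htriple, Hca; field; lra).
  assert (Hm2 : 0 < m * m) by nra.
  rewrite Ey, Eb. replace a with (- 3 * (m * m)) by lra.
  repeat split.
  - ring.
  - nra.
  - assert (C * C < 1) by nra. nra.
  - assert (1 / 4 < C * C) by nra. nra.
Qed.

(* The two discriminants of the quadratic factors in Ferrari's method,
   where s = sqrt(2 z). *)
Definition ferrari_disc_plus (p q z s : R) : R := 2 * z - 4 * (p / 2 + z + q / (2 * s)).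
Definition ferrari_disc_minus (p q z s : R) : R := 2 * z - 4 * (p / 2 + z - q / (2 * s)).

(* z = y - p/3 is a root of Ferrari's resolvent cubic when y is a root of the
   depressed resolvent y^3 + a y + b. *)
Lemma ferrari_resolvent p q r y z :
  y^3 + (- p^2 / 12 - r) * y + (- p^3 / 108 + p * r / 3 - q^2 / 8) = 0 ->
  z = y - p / 3 -> q^2 = 8 * z * ((z + p / 2)^2 - r).
Proof. intros Hy ->. nra. Qed.

Lemma ferrari_disc_sum p q z s :
  0 < s -> ferrari_disc_plus p q z s + ferrari_disc_minus p q z s = - 4 * p - 4 * z.
Proof. intro Hs. unfold ferrari_disc_plus, ferrari_disc_minus. field. lra. Qed.

Lemma ferrari_disc_product p q r z s :
  q^2 = 8 * z * ((z + p / 2)^2 - r) -> 0 < s -> s * s = 2 * z ->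
  ferrari_disc_plus p q z s * ferrari_disc_minus p q z s = - 12 * z^2 - 8 * p * z + 16 * r.
Proof.
  intros Hres Hs Hss. unfold ferrari_disc_plus, ferrari_disc_minus.
  replace (q / (2 * s)) with (q / s / 2) by (field; lra).
  assert (Hqs : (q / s)^2 = 4 * ((z + p / 2)^2 - r)).
  { replace ((q / s)^2) with (q^2 / (s * s)) by (field; lra).
    rewrite Hss, Hres. field. nra. }
  nra.
Qed.

Lemma ferrari_discs_pos p q r y z s :
  q^2 = 8 * z * ((z + p / 2)^2 - r) -> z = y - p / 3 -> 0 < z ->
  0 < s -> s * s = 2 * z -> y < 0 -> 3 * y^2 < 4 * (p^2 / 12 + r) ->
  0 < ferrari_disc_plus p q z s /\ 0 < ferrari_disc_minus p q z s.
Proof.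
  intros Hres Hz Hz0 Hs Hss Hy Hy2.
  pose proof (ferrari_disc_sum p q z s Hs) as Hsum.
  pose proof (ferrari_disc_product p q r z s Hres Hs Hss) as Hprod.
  assert (0 < ferrari_disc_plus p q z s * ferrari_disc_minus p q z s) by (subst z; nra).
  assert (0 < ferrari_disc_plus p q z s + ferrari_disc_minus p q z s) by (subst z; nra).
  destruct (Rle_or_lt (ferrari_disc_plus p q z s) 0);
    destruct (Rle_or_lt (ferrari_disc_minus p q z s) 0); split; nra.
Qed.

(* With y below -sqrt(-a/3) the square roots u, v of the discriminants are
   far enough apart that the four Ferrari roots are distinct. *)
Lemma ferrari_separation p q r y z s u v :
  q^2 = 8 * z * ((z + p / 2)^2 - r) -> z = y - p / 3 -> 0 < z ->
  0 < s -> s * s = 2 * z -> y < 0 -> p^2 / 12 + r < 3 * y^2 ->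
  0 < u -> 0 < v ->
  u * u = ferrari_disc_plus p q z s -> v * v = ferrari_disc_minus p q z s ->
  4 * (s * s) < (u - v)^2 /\ 4 * (s * s) < (u + v)^2.
Proof.
  intros Hres Hz Hz0 Hs Hss Hy Hy2 Hu Hv Huu Hvv.
  pose proof (ferrari_disc_sum p q z s Hs) as Hsum.
  pose proof (ferrari_disc_product p q r z s Hres Hs Hss) as Hprod.
  rewrite <- Huu, <- Hvv in Hsum, Hprod.
  assert (Huv : 0 < u * v) by nra.
  assert (Hgap : 2 * (u * v) < - 12 * y).
  { apply Rsqr_incrst_0; [unfold Rsqr; subst z; nra | lra | lra]. }
  subst z. split; nra.
Qed.

Lemma ferrari_factorization p q r z s u v w :
  q^2 = 8 * z * ((z + p / 2)^2 - r) -> 0 < z -> 0 < s -> s * s = 2 * z ->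
  u * u = ferrari_disc_plus p q z s -> v * v = ferrari_disc_minus p q z s ->
  w^4 + p * w^2 + q * w + r =
  (w - (s + u) / 2) * (w - (s - u) / 2) * (w - (- s + v) / 2) * (w - (- s - v) / 2).
Proof.
  intros Hres Hz Hs Hss Huu Hvv.
  transitivity ((w^2 - s * w + (s * s - u * u) / 4) * (w^2 + s * w + (s * s - v * v) / 4));
    [|field].
  rewrite Huu, Hvv. unfold ferrari_disc_plus, ferrari_disc_minus.
  replace r with ((z + p / 2)^2 - q^2 / (8 * z)) by (rewrite Hres; field; lra).
  replace z with (s * s / 2) by lra. field. lra.
Qed.

Lemma P5'_depressed c x :
  mu0 c <> 0 ->
  P5' c x = 5 * mu0 c * ((x + shift c)^4 + pp c * (x + shift c)^2
                         + qq c * (x + shift c) + rr c).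
Proof. intro H. unfold P5', shift, pp, qq, rr. field. exact H. Qed.

Lemma P5'_factorization c alpha :
  0 < a4 c -> QQ c < 0 -> 0 <= alpha <= PI -> cos alpha = cos_alpha c ->
  0 < z0 c alpha ->
  distinct4 (xi_ext1 c alpha) (xi_ext2 c alpha) (xi_ext3 c alpha) (xi_ext4 c alpha) /\
  forall x, P5' c x = 5 * mu0 c *
    prod4 x (xi_ext1 c alpha) (xi_ext2 c alpha) (xi_ext3 c alpha) (xi_ext4 c alpha).
Proof.
  intros ha4 HQ Hal Hcos Hz.
  destruct (viete_root_spec (aa c) (bb c) alpha HQ Hal Hcos) as (Hcub & Hy & Hy1 & Hy2).
  set (y := viete_root (aa c) alpha) in *.
  unfold aa, bb in *. set (p := pp c) in *. set (q := qq c) in *. set (r := rr c) in *.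
  set (z := z0 c alpha) in *.
  assert (Ez : z = y - p / 3) by reflexivity.
  pose proof (ferrari_resolvent p q r y z Hcub Ez) as Hres.
  set (s := sqrt (2 * z)).
  assert (Hs : 0 < s) by (apply sqrt_lt_R0; lra).
  assert (Hss : s * s = 2 * z) by (apply sqrt_sqrt; lra).
  destruct (ferrari_discs_pos p q r y z s Hres Ez Hz Hs Hss Hy ltac:(lra)) as [HD1 HD2].
  set (u := sqrt (ferrari_disc_plus p q z s)).
  set (v := sqrt (ferrari_disc_minus p q z s)).
  assert (Hu : 0 < u) by (apply sqrt_lt_R0; lra).
  assert (Hv : 0 < v) by (apply sqrt_lt_R0; lra).
  assert (Huu : u * u = ferrari_disc_plus p q z s) by (apply sqrt_sqrt; lra).
  assert (Hvv : v * v = ferrari_disc_minus p q z s) by (apply sqrt_sqrt; lra).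
  destruct (ferrari_separation p q r y z s u v Hres Ez Hz Hs Hss Hy ltac:(lra)
              Hu Hv Huu Hvv) as [Hsep1 Hsep2].
  change (xi_ext1 c alpha) with ((s + u) / 2 - shift c).
  change (xi_ext2 c alpha) with ((s - u) / 2 - shift c).
  change (xi_ext3 c alpha) with ((- s + v) / 2 - shift c).
  change (xi_ext4 c alpha) with ((- s - v) / 2 - shift c).
  split.
  - unfold distinct4. repeat split; intro E; nra.
  - intro x. rewrite P5'_depressed by (unfold mu0; lra). fold p q r.
    rewrite (ferrari_factorization p q r z s u v (x + shift c) Hres Hz Hs Hss Huu Hvv).
    unfold prod4; ring.
Qed.

Theorem theorem2 (c : coeffs) (alpha : R) :
  0 < a0 c -> 0 < a1 c -> 0 < a2 c -> 0 < a3 c -> 0 < a4 c ->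
  0 < b0 c -> 0 < b1 c -> 0 < b2 c -> 0 < b3 c -> 0 < b4 c ->
  QQ c < 0 ->
  0 <= alpha <= PI -> cos alpha = cos_alpha c ->
  0 < z0 c alpha ->
  0 < xi_min c alpha ->
  (P5 c (xi_min c alpha) = 0 \/ P5 c (xi_max c alpha) = 0) ->
  at_least_two_pos_fixed_points c.
Proof.
  intros ha0 ha1 ha2 ha3 ha4 hb0 hb1 hb2 hb3 hb4 HQ Hal Hcos Hz Hmin Hroot.
  destruct (P5'_factorization c alpha ha4 HQ Hal Hcos Hz) as [Hdist HP5'].
  assert (HK : 0 < 5 * mu0 c) by (unfold mu0; lra).
  assert (Hmu0 : 0 < mu0 c) by (unfold mu0; lra).
  assert (Hmu5 : 0 < mu5 c) by (unfold mu5; lra).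
  destruct Hroot as [Hr | Hr].
  - destruct (prod4_min_first _ _ _ _ Hdist) as (r2 & r3 & r4 & h2 & h3 & h4 & Hperm).
    destruct (decreases_right_of_smallest (P5 c) (P5' c) _ _ r2 r3 r4
                (P5_derivative c) HK h2 h3 h4)
      as (t1 & Ht1 & Pt1); [intro x; rewrite HP5', Hperm; reflexivity|].
    change (min4 _ _ _ _) with (xi_min c alpha) in *.
    destruct (root_right_of_negative c t1 Hmu0 ltac:(lra)) as (t2 & Ht2 & Pt2).
    apply (two_fixed_points_of_two_roots c (xi_min c alpha) t2); auto; lra.
  - destruct (prod4_max_first _ _ _ _ Hdist) as (r2 & r3 & r4 & h1 & h2 & h3 & h4 & Hperm).
    destruct (decreases_left_of_largest (P5 c) (P5' c) _ _ r2 r3 r4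
                (P5_derivative c) HK h2 h3 h4)
      as (t1 & Ht1 & Pt1); [intro x; rewrite HP5', Hperm; reflexivity|].
    change (min4 _ _ _ _) with (xi_min c alpha) in *.
    change (max4 _ _ _ _) with (xi_max c alpha) in *.
    destruct (root_left_of_positive c t1 Hmu5 ltac:(lra) ltac:(lra)) as (t2 & Ht2 & Pt2).
    apply (two_fixed_points_of_two_roots c t2 (xi_max c alpha)); auto; lra.
Qed.
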